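(* Let $S$ be a left adequate semigroup with an adequate transversal $S^0$. Then for all $x\in S$, $f_x=f_{\bar x}$, and so $x=e_x\bar x$.
   Context: For a semigroup $S$, $\mathcal{R}^\ast=\{(a,b): \text{for all } x,y\in S^1,\ xa=ya \iff xb=yb\}$ and $\mathcal{L}^\ast$ is defined dually. $S$ is abundant if every $\mathcal{R}^\ast$-class and every $\mathcal{L}^\ast$-class contains an idempotent; adequate if abundant and its idempotents commute; left adequate if abundant and every $\mathcal{R}^\ast$-class contains a unique idempotent. In an adequate semigroup $a^+,a^\ast$ denote the unique idempotents in the $\mathcal{R}^\ast$-, resp. $\mathcal{L}^\ast$-class of $a$. A subsemigroup $U$ of abundant $S$ is a $\ast$-subsemigroup if $U$ is abundant and $\mathcal{L}^\ast_U=\mathcal{L}^\ast_S\cap(U\times U)$, $\mathcal{R}^\ast_U=\mathcal{R}^\ast_S\cap(U\times U)$. An adequate $\ast$-subsemigroup $S^0$ of abundant $S$ is an adequate transversal if for each $x\in S$ there is a unique $\bar x\in S^0$ and idempotents $e,f$ of $S$ with $x=e\bar xf$, $e\,\mathcal{L}\,\bar x^+$, $f\,\mathcal{R}\,\bar x^\ast$; these $e,f$ are uniquely determined and denoted $e_x,f_x$. *)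

Set Implicit Arguments.

Section Semigroups.
Variable T : Type.
Variable mul : T -> T -> T.

Definition associative_op : Prop :=
  forall a b c, mul a (mul b c) = mul (mul a b) c.

Definition idempotent (e : T) : Prop := mul e e = e.

(* S^1 is modelled as [option T]: [None] is the adjoined identity. *)
Definition lmul1 (x : option T) (a : T) : T :=
  match x with None => a | Some u => mul u a end.
Definition rmul1 (a : T) (x : option T) : T :=
  match x with None => a | Some u => mul a u end.

Definition in1 (U : T -> Prop) (x : option T) : Prop :=
  match x with None => True | Some u => U u end.

Definition RstarIn (U : T -> Prop) (a b : T) : Prop :=
  forall x y, in1 U x -> in1 U y ->
    (lmul1 x a = lmul1 y a <-> lmul1 x b = lmul1 y b).
Definition LstarIn (U : T -> Prop) (a b : T) : Prop :=
  forall x y, in1 U x -> in1 U y ->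
    (rmul1 a x = rmul1 a y <-> rmul1 b x = rmul1 b y).

Definition allS : T -> Prop := fun _ => True.
Definition Rstar := RstarIn allS.
Definition Lstar := LstarIn allS.

Definition GreenL (a b : T) : Prop :=
  exists x y : option T, a = lmul1 x b /\ b = lmul1 y a.
Definition GreenR (a b : T) : Prop :=
  exists x y : option T, a = rmul1 b x /\ b = rmul1 a y.

Definition subsemigroup (U : T -> Prop) : Prop :=
  forall a b, U a -> U b -> U (mul a b).

Definition abundantIn (U : T -> Prop) : Prop :=
  (forall a, U a -> exists e, U e /\ idempotent e /\ RstarIn U a e) /\
  (forall a, U a -> exists e, U e /\ idempotent e /\ LstarIn U a e).

Definition abundant : Prop := abundantIn allS.

Definition adequateIn (U : T -> Prop) : Prop :=
  abundantIn U /\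
  forall e f, U e -> U f -> idempotent e -> idempotent f -> mul e f = mul f e.

Definition left_adequate : Prop :=
  abundant /\
  forall a e f, idempotent e -> idempotent f -> Rstar a e -> Rstar a f -> e = f.

Definition star_subsemigroup (U : T -> Prop) : Prop :=
  subsemigroup U /\ abundantIn U /\
  (forall a b, U a -> U b -> (LstarIn U a b <-> Lstar a b)) /\
  (forall a b, U a -> U b -> (RstarIn U a b <-> Rstar a b)).

Definition is_plus (U : T -> Prop) (a e : T) : Prop :=
  U e /\ idempotent e /\ RstarIn U a e.
Definition is_star (U : T -> Prop) (a e : T) : Prop :=
  U e /\ idempotent e /\ LstarIn U a e.

Definition decomp (U : T -> Prop) (x xb e f : T) : Prop :=
  U xb /\ idempotent e /\ idempotent f /\ x = mul (mul e xb) f /\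
  (exists p, is_plus U xb p /\ GreenL e p) /\
  (exists s, is_star U xb s /\ GreenR f s).

Definition adequate_transversal (U : T -> Prop) : Prop :=
  adequateIn U /\ star_subsemigroup U /\
  forall x, exists xb, (exists e f, decomp U x xb e f) /\
    forall xb', (exists e f, decomp U x xb' e f) -> xb' = xb.

End Semigroups.

Set Implicit Arguments.
Unset Strict Implicit.

(* An element a of S^0 decomposes trivially as a^+ a a^*, so by uniqueness it is
   its own representative; in particular the bar of bar x is bar x.  Hence f_x and
   f_(bar x) are both R-related to (bar x)^*, which is unique because S^0 is
   adequate; since R is contained in R^* and S is left adequate, f_x = f_(bar x).
   Finally bar x = e (bar x) f_x absorbs f_x on the right, giving x = e_x (bar x). *)

Section AdequateTransversal.

Variable T : Type.
Variable mul : T -> T -> T.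
Hypothesis mulA : associative_op mul.

Lemma lmul1_rmul1A u a y :
  lmul1 mul u (rmul1 mul a y) = rmul1 mul (lmul1 mul u a) y.
Proof. destruct u as [u|], y as [y|]; simpl; auto. Qed.

Lemma GreenR_Rstar a b : GreenR mul a b -> Rstar mul a b.
Proof.
  intros [x [y [Ha Hb]]] u v _ _; split; intro Huv.
  - rewrite Hb, !lmul1_rmul1A, Huv; reflexivity.
  - rewrite Ha, !lmul1_rmul1A, Huv; reflexivity.
Qed.

Lemma RstarIn_sym U a b : RstarIn mul U a b -> RstarIn mul U b a.
Proof. intros H u v Hu Hv; apply iff_sym, H; assumption. Qed.

Lemma is_plus_lid U a p : is_plus mul U a p -> mul p a = a.
Proof.
  intros [Up [Ip Rp]].
  apply (proj2 (Rp (Some p) None Up I)); exact Ip.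
Qed.

Lemma is_star_rid U a s : is_star mul U a s -> mul a s = a.
Proof.
  intros [Us [Is Ls]].
  apply (proj2 (Ls (Some s) None Us I)); exact Is.
Qed.

Lemma LstarIn_absorb U a e f :
  LstarIn mul U a e -> U f -> mul a f = a -> mul e f = e.
Proof. intros Le Uf Haf; apply (proj1 (Le (Some f) None Uf I)); exact Haf. Qed.

Lemma is_star_unique U a s s' :
  adequateIn mul U -> is_star mul U a s -> is_star mul U a s' -> s = s'.
Proof.
  intros [_ comm] Hs Hs'.
  destruct Hs as [Us [Is Ls]], Hs' as [Us' [Is' Ls']].
  assert (Hss' : mul s s' = s)
    by (apply (LstarIn_absorb Ls Us'), (is_star_rid (conj Us' (conj Is' Ls')))).
  assert (Hs's : mul s' s = s')
    by (apply (LstarIn_absorb Ls' Us), (is_star_rid (conj Us (conj Is Ls)))).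
  rewrite <- Hss', comm; assumption.
Qed.

Lemma left_adequate_GreenR_unique e f s :
  left_adequate mul -> idempotent mul e -> idempotent mul f ->
  GreenR mul e s -> GreenR mul f s -> e = f.
Proof.
  intros [_ LA] Ie If Res Rfs.
  apply (LA s); auto; apply RstarIn_sym, GreenR_Rstar; assumption.
Qed.

Lemma decomp_self U a p s :
  U a -> is_plus mul U a p -> is_star mul U a s -> decomp mul U a a p s.
Proof.
  intros Ua Hp Hs.
  pose proof Hp as [_ [Ip _]]; pose proof Hs as [_ [Is _]].
  repeat split; auto.
  - rewrite (is_plus_lid Hp), (is_star_rid Hs); reflexivity.
  - exists p; split; [exact Hp | exists None, None; auto].
  - exists s; split; [exact Hs | exists None, None; auto].
Qed.

Lemma adequate_transversal_bar_id U a ab e f :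
  adequate_transversal mul U -> U a -> decomp mul U a ab e f -> ab = a.
Proof.
  intros [[[plus star] _] [_ uniq]] Ua Hab.
  destruct (plus a Ua) as [p Hp], (star a Ua) as [s Hs].
  destruct (uniq a) as [a0 [_ uniq_a]].
  transitivity a0; [|symmetry]; apply uniq_a.
  - exists e, f; exact Hab.
  - exists p, s; apply decomp_self; assumption.
Qed.

Lemma decomp_right_unique U x y xb e f e' f' :
  left_adequate mul -> adequateIn mul U ->
  decomp mul U x xb e f -> decomp mul U y xb e' f' -> f = f'.
Proof.
  intros LA AU [_ [_ [If [_ [_ [s [Hs Rfs]]]]]]] [_ [_ [If' [_ [_ [s' [Hs' Rfs']]]]]]].
  rewrite <- (is_star_unique AU Hs Hs') in Rfs'.
  exact (left_adequate_GreenR_unique LA If If' Rfs Rfs').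
Qed.

Lemma idempotent_rid a b f : idempotent mul f -> a = mul b f -> mul a f = a.
Proof. intros If ->; rewrite <- mulA, If; reflexivity. Qed.

End AdequateTransversal.

Theorem corollary2p2 (T : Type) (mul : T -> T -> T) (S0 : T -> Prop) :
  associative_op mul ->
  left_adequate mul ->
  adequate_transversal mul S0 ->
  forall x xb ex fx, decomp mul S0 x xb ex fx ->
  forall xbb exb fxb, decomp mul S0 xb xbb exb fxb ->
  fx = fxb /\ x = mul ex xb.
Proof.
  intros mulA LA AT x xb ex fx Hx xbb exb fxb Hxb.
  pose proof Hx as [Uxb [_ [Ifx [Ex _]]]].
  rewrite (adequate_transversal_bar_id AT Uxb Hxb) in Hxb.
  assert (Efx : fx = fxb)
    by exact (decomp_right_unique mulA LA (proj1 AT) Hx Hxb).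
  split; [exact Efx|].
  pose proof Hxb as [_ [_ [_ [Exb _]]]].
  rewrite <- Efx in Exb.
  rewrite Ex, <- mulA, (idempotent_rid mulA Ifx Exb); reflexivity.
Qed.
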